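(* Let $p>1$ and $r,s\in(0,1)$. Then (1) $\arcsin_p(rs)\le\sqrt{\arcsin_p(r^2)\arcsin_p(s^2)}\le\arcsin_p(r)\arcsin_p(s)$; (2) $\operatorname{artanh}_p(rs)\le\sqrt{\operatorname{artanh}_p(r^2)\operatorname{artanh}_p(s^2)}\le\operatorname{artanh}_p(r)\operatorname{artanh}_p(s)$; (3) $\operatorname{arsinh}_p(r)\operatorname{arsinh}_p(s)\le\sqrt{\operatorname{arsinh}_p(r^2)\operatorname{arsinh}_p(s^2)}\le\operatorname{arsinh}_p(rs)$; (4) $\arctan_p(r)\arctan_p(s)\le\sqrt{\arctan_p(r^2)\arctan_p(s^2)}\le\arctan_p(rs)$.
   Context: For $p>1$ and $y\in(0,1)$: $\arcsin_p y=\int_0^y(1-t^p)^{-1/p}dt$, $\arctan_p y=\int_0^y(1+t^p)^{-1}dt$, $\operatorname{arsinh}_p y=\int_0^y(1+t^p)^{-1/p}dt$, $\operatorname{artanh}_p y=\int_0^y(1-t^p)^{-1}dt$. *)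

From HB Require Import structures.
From mathcomp Require Import all_boot all_order all_algebra.
From mathcomp Require Import all_classical all_reals all_analysis.
Set Implicit Arguments. Unset Strict Implicit. Unset Printing Implicit Defensive.
Import Order.TTheory GRing.Theory Num.Theory.
Local Open Scope classical_set_scope.
Local Open Scope ring_scope.

Section GenTrig.
Context {R : realType}.
Notation mu := (@lebesgue_measure R).

Definition arcsin_p (p y : R) : R :=
  Rintegral mu `[0, y] (fun t => (1 - t `^ p) `^ (- p^-1)).
Definition arctan_p (p y : R) : R :=
  Rintegral mu `[0, y] (fun t => (1 + t `^ p)^-1).
Definition arsinh_p (p y : R) : R :=
  Rintegral mu `[0, y] (fun t => (1 + t `^ p) `^ (- p^-1)).
Definition artanh_p (p y : R) : R :=
  Rintegral mu `[0, y] (fun t => (1 - t `^ p)^-1).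
End GenTrig.

From HB Require Import structures.
From mathcomp Require Import all_boot all_order all_algebra.
From mathcomp Require Import all_classical all_reals all_analysis.
From mathcomp Require Import ring lra.
Import Order.TTheory GRing.Theory Num.Theory.
Import numFieldNormedType.Exports.
Local Open Scope classical_set_scope.
Local Open Scope ring_scope.

(* Each function is F(y) = \int_0^y g with g(t) = (1 -/+ t^p)^(-q).  Substituting
   t = lam u gives F(lam y) = lam \int_0^y g(lam u) du, and integrating the monotonicity
   of t |-> g(lam t) / g(t) over [0, y1] x ]y1, y2] shows that y |-> F(lam y) / F(y) is
   monotone in the same direction; with lam = r / s this compares F(rs)^2 with
   F(r^2) F(s^2).  The other inequality compares F(r^2) = r \int_0^r g(r u) du with
   r F(r), as g is monotone, and r F(r) with F(r)^2, as g(0) = 1 puts F(r) on the same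
   side of r as g is of 1.  For 1 - t^p the weight g increases and the ratio decreases;
   for 1 + t^p both directions flip. *)

Lemma sqrtr_bounds (R : rcfType) (a b c : R) :
  0 <= c -> a ^+ 2 <= b <= c ^+ 2 -> a <= Num.sqrt b <= c.
Proof.
move=> c0 /andP[ab bc]; apply/andP; split.
- by rewrite (le_trans (ler_norm a)) // -sqrtr_sqr ler_wsqrtr.
- by rewrite -(ger0_norm c0) -sqrtr_sqr ler_wsqrtr.
Qed.

Section IntervalIntegrals.
Context {R : realType}.
Local Notation mu := (@lebesgue_measure R).
Implicit Types (f g : R -> R) (a b t x y lam : R).

Lemma Rintegral_scale g lam a b : 0 < lam -> a <= b ->
  {within `[lam * a, lam * b], continuous g} ->
  \int[mu]_(x in `[lam * a, lam * b]) g x =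
  \int[mu]_(x in `[a, b]) (g (lam * x) * lam).
Proof.
move=> lam0 ab gc.
have dlam : ( *%R lam)^`()%classic = cst lam.
  apply/funext => x; rewrite derive1Ml ?derive1_id ?mulr1 //; exact: derivable_id.
have clam : continuous ( *%R lam) := @mulrl_continuous _ lam.
rewrite /Rintegral; congr fine.
rewrite (@integration_by_substitution_increasing _ ( *%R lam) g a b ab) //.
- by apply: eq_integral => x _ /=; rewrite dlam.
- by move=> x y _ _ xy; rewrite ltr_pM2l.
- by rewrite dlam => x _; exact: cvg_cst.
- by rewrite dlam; exact: is_cvg_cst.
- by rewrite dlam; exact: is_cvg_cst.
- split; [|exact/cvg_at_right_filter/clam|exact/cvg_at_left_filter/clam].
  move=> x _; rewrite -[( *%R lam)]/(cst lam * id)%R.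
  by apply: derivableM; [exact: derivable_cst|exact: derivable_id].
Qed.

Lemma continuous_integrable_itv {f c d a b} : {in `]c, d[, continuous f} ->
  c < a -> b < d -> mu.-integrable `[a, b] (EFin \o f).
Proof.
move=> fc ca bd; apply: continuous_compact_integrable; first exact: segment_compact.
apply: continuous_in_subspaceT => x; rewrite inE /= in_itv /= => /andP[ax xb].
by apply: fc; rewrite in_itv /= (lt_le_trans ca ax) (le_lt_trans xb bd).
Qed.

Lemma Rintegral_itv_cst k a b : a <= b -> \int[mu]_(x in `[a, b]) k = k * (b - a).
Proof.
move=> ab; rewrite Rintegral_cst //.
have := lebesgue_measure_itv `[a, b]; rewrite /= => ->; rewrite lte_fin.
rewrite lt_neqAle ab andbT; have [->|_] := eqVneq a b; rewrite /= ?subrr ?mulr0 //.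
Qed.

Lemma integrable_cst_itv k a b : mu.-integrable `[a, b] (EFin \o cst k).
Proof.
apply: (continuous_integrable_itv (c := a - 1) (d := b + 1)); last 2 first.
- by rewrite ltrBlDr ltrDl.
- by rewrite ltrDl.
by move=> x _; exact: cst_continuous.
Qed.

Lemma Rintegral_itv_split f a b c : a <= b <= c ->
  mu.-integrable `[a, c] (EFin \o f) ->
  \int[mu]_(x in `[a, c]) f x =
  \int[mu]_(x in `[a, b]) f x + \int[mu]_(x in `]b, c]) f x.
Proof.
move=> /andP[ab bc] intf.
by rewrite -(Rintegral_itvB intf) ?bnd_simp // addrC subrK.
Qed.

Lemma Rintegral_ratio_le f g a y1 y2 : a <= y1 <= y2 ->
  mu.-integrable `[a, y2] (EFin \o f) -> mu.-integrable `[a, y2] (EFin \o g) ->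
  (forall t x, a <= t <= y1 -> y1 < x <= y2 -> f x * g t <= f t * g x) ->
  \int[mu]_(x in `[a, y2]) f x * \int[mu]_(x in `[a, y1]) g x <=
  \int[mu]_(x in `[a, y1]) f x * \int[mu]_(x in `[a, y2]) g x.
Proof.
(* Integrate the hypothesis in t over [a, y1], then in x over ]y1, y2]. *)
move=> /andP[ay1 y12] intf intg fg.
have sub h : mu.-integrable `[a, y2] (EFin \o h) ->
    mu.-integrable `[a, y1] (EFin \o h) /\ mu.-integrable `]y1, y2] (EFin \o h).
  move=> inth; split; apply: integrableS inth => // x /=; rewrite !in_itv /=.
    by case/andP=> -> /le_trans->.
  by case/andP=> /ltW/(le_trans ay1) ->.
have [intf1 intf2] := sub f intf; have [intg1 intg2] := sub g intg.
have pointwise x : y1 < x <= y2 ->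
    f x * \int[mu]_(t in `[a, y1]) g t <= \int[mu]_(t in `[a, y1]) f t * g x.
  move=> xI; rewrite -RintegralZl // -RintegralZr //.
  apply: le_Rintegral => //.
  - have := integrableZl _ (f x) intg1; exact.
  - have := integrableZr _ (g x) intf1; exact.
  - by move=> t /=; rewrite in_itv /= => tI; rewrite fg.
set F1 := \int[mu]_(x in `[a, y1]) f x; set G1 := \int[mu]_(x in `[a, y1]) g x.
have tail : \int[mu]_(x in `]y1, y2]) f x * G1 <= F1 * \int[mu]_(x in `]y1, y2]) g x.
  rewrite -RintegralZr // -RintegralZl //.
  apply: le_Rintegral => //.
  - have := integrableZr _ G1 intf2; exact.
  - have := integrableZl _ F1 intg2; exact.
rewrite (@Rintegral_itv_split f a y1 y2) ?ay1 // (@Rintegral_itv_split g a y1 y2) ?ay1 //.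
by rewrite -/F1 -/G1 mulrDl mulrDr mulrC lerD2l.
Qed.

End IntervalIntegrals.

Section Primitive.
Context {R : realType}.
Local Notation mu := (@lebesgue_measure R).
Implicit Types (t x y lam : R).
Variable g : R -> R.
Hypothesis g_cont : {in `]-1, 1[, continuous g}.

Definition prim y := \int[mu]_(t in `[0, y]) g t.

Let in_unit_itv x : (x \in `]-1, 1[) = (`|x| < 1).
Proof. by rewrite in_itv /= ltr_norml. Qed.

Lemma continuous_scale lam : 0 <= lam <= 1 ->
  {in `]-1, 1[, continuous (fun t => g (lam * t) * lam)}.
Proof.
move=> /andP[lam0 lam1] t; rewrite in_unit_itv => t1.
apply: (@continuousM _ _ (g \o *%R lam) (cst lam) t); last exact: cvg_cst.
apply: continuous_comp; first exact: mulrl_continuous.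
apply: g_cont; rewrite in_unit_itv normrM ger0_norm //.
by apply: le_lt_trans t1; rewrite ler_piMl.
Qed.

Lemma integrable_unit_itv a b : 0 <= a -> b < 1 -> mu.-integrable `[a, b] (EFin \o g).
Proof.
by move=> a0 b1; apply: (continuous_integrable_itv g_cont) => //; apply: lt_le_trans a0.
Qed.

Lemma integrable_scale lam a b : 0 <= lam <= 1 -> 0 <= a -> b < 1 ->
  mu.-integrable `[a, b] (EFin \o (fun t => g (lam * t) * lam)).
Proof.
move=> lamI a0 b1; apply: (continuous_integrable_itv (continuous_scale _ lamI)) => //.
exact: lt_le_trans a0.
Qed.

Lemma prim_scale lam y : 0 < lam <= 1 -> 0 <= y < 1 ->
  prim (lam * y) = \int[mu]_(t in `[0, y]) (g (lam * t) * lam).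
Proof.
move=> /andP[lam0 lam1] /andP[y0 y1]; rewrite /prim -[X in `[X, _]](mulr0 lam).
rewrite Rintegral_scale //; apply: continuous_in_subspaceT => x.
rewrite inE /= in_itv /= mulr0 => /andP[x0 xy].
apply: g_cont; rewrite in_unit_itv ger0_norm // (le_lt_trans xy) //.
by apply: le_lt_trans y1; rewrite ler_piMl.
Qed.

(* Cross-multiplied form of: for each lam, t |-> g (lam * t) / g t is monotone on [0, 1[. *)
Definition scaled_ratio_nonincreasing := forall lam t y, 0 < lam <= 1 ->
  0 <= t <= y -> y < 1 -> g (lam * y) * g t <= g y * g (lam * t).

Definition scaled_ratio_nondecreasing := forall lam t y, 0 < lam <= 1 ->
  0 <= t <= y -> y < 1 -> g y * g (lam * t) <= g (lam * y) * g t.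

Lemma prim_ge0 y : (forall t, 0 <= t < 1 -> 0 <= g t) -> y < 1 -> 0 <= prim y.
Proof.
move=> g_ge0 y1; apply: Rintegral_ge0 => t /=; rewrite in_itv /= => /andP[t0 ty].
by apply: g_ge0; rewrite t0 (le_lt_trans ty y1).
Qed.

Lemma prim_scale_ratio_le lam y1 y2 : scaled_ratio_nonincreasing ->
  0 < lam <= 1 -> 0 <= y1 <= y2 -> y2 < 1 ->
  prim (lam * y2) * prim y1 <= prim (lam * y1) * prim y2.
Proof.
move=> ratio lamI /andP[y10 y12] y21; have y11 := le_lt_trans y12 y21.
have lam01 : 0 <= lam <= 1 by case/andP: lamI => /ltW -> ->.
rewrite !prim_scale ?y10 ?(le_trans y10 y12) //.
apply: Rintegral_ratio_le; rewrite ?y10 ?y12 //.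
- exact: integrable_scale.
- exact: integrable_unit_itv.
move=> t x /andP[t0 ty1] /andP[y1x xy2].
have := ratio lam t x lamI; rewrite t0 (le_trans ty1 (ltW y1x)).
move=> /(_ isT (le_lt_trans xy2 y21)); case/andP: lamI => lam0 _; nra.
Qed.

Lemma prim_scale_ratio_ge lam y1 y2 : scaled_ratio_nondecreasing ->
  0 < lam <= 1 -> 0 <= y1 <= y2 -> y2 < 1 ->
  prim y2 * prim (lam * y1) <= prim y1 * prim (lam * y2).
Proof.
move=> ratio lamI /andP[y10 y12] y21; have y11 := le_lt_trans y12 y21.
have lam01 : 0 <= lam <= 1 by case/andP: lamI => /ltW -> ->.
rewrite !prim_scale ?y10 ?(le_trans y10 y12) //.
apply: Rintegral_ratio_le; rewrite ?y10 ?y12 //.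
- exact: integrable_unit_itv.
- exact: integrable_scale.
move=> t x /andP[t0 ty1] /andP[y1x xy2].
have := ratio lam t x lamI; rewrite t0 (le_trans ty1 (ltW y1x)).
move=> /(_ isT (le_lt_trans xy2 y21)); case/andP: lamI => lam0 _; nra.
Qed.

Lemma prim_mul_sqr_le r s : scaled_ratio_nonincreasing ->
  0 < r < 1 -> 0 < s < 1 -> prim (r * s) ^+ 2 <= prim (r ^+ 2) * prim (s ^+ 2).
Proof.
move=> ratio; wlog rs : r s / r <= s.
  move=> W hr hs; case: (lerP r s) => [|/ltW] rs; first exact: W.
  by rewrite mulrC [X in _ <= X]mulrC; apply: W.
move=> /andP[r0 r1] /andP[s0 s1]; have sN0 : s != 0 by rewrite gt_eqF.
(* lam = r / s sends s^2 to rs and rs to r^2. *)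
have := prim_scale_ratio_le (r / s) (r * s) (s ^+ 2) ratio.
have -> : r / s * s ^+ 2 = r * s by field.
have -> : r / s * (r * s) = r ^+ 2 by field.
rewrite [prim _ ^+ 2]expr2; apply.
- by rewrite divr_gt0 //= ler_pdivrMr // mul1r.
- by rewrite mulr_ge0 ?(ltW r0) ?(ltW s0) //= expr2 ler_pM2r.
- by rewrite expr2 mulr_ilt1 ?(ltW s0).
Qed.

Lemma prim_mul_sqr_ge r s : scaled_ratio_nondecreasing ->
  0 < r < 1 -> 0 < s < 1 -> prim (r ^+ 2) * prim (s ^+ 2) <= prim (r * s) ^+ 2.
Proof.
move=> ratio; wlog rs : r s / r <= s.
  move=> W hr hs; case: (lerP r s) => [|/ltW] rs; first exact: W.
  by rewrite mulrC [r * s]mulrC; apply: W.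
move=> /andP[r0 r1] /andP[s0 s1]; have sN0 : s != 0 by rewrite gt_eqF.
have := prim_scale_ratio_ge (r / s) (r * s) (s ^+ 2) ratio.
have -> : r / s * s ^+ 2 = r * s by field.
have -> : r / s * (r * s) = r ^+ 2 by field.
rewrite [prim _ ^+ 2]expr2 [prim (r ^+ 2) * _]mulrC; apply.
- by rewrite divr_gt0 //= ler_pdivrMr // mul1r.
- by rewrite mulr_ge0 ?(ltW r0) ?(ltW s0) //= expr2 ler_pM2r.
- by rewrite expr2 mulr_ilt1 ?(ltW s0).
Qed.

Section NondecreasingIntegrand.
Hypothesis g_nondecr : {in `[0, 1[ &, {homo g : x y / x <= y}}.
Hypothesis g_at0 : g 0 = 1.

Let g_ge1 t : 0 <= t < 1 -> 1 <= g t.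
Proof.
by move=> /andP[t0 t1]; rewrite -g_at0 g_nondecr // in_itv /= ?lexx ?ltr01 ?t0.
Qed.

Lemma prim_sqr_le r : 0 < r < 1 -> prim (r ^+ 2) <= prim r ^+ 2.
Proof.
move=> /andP[r0 r1]; have rI : 0 < r <= 1 by rewrite r0 ltW.
have intg := integrable_unit_itv _ _ (lexx 0) r1.
have r_le : r <= prim r.
  rewrite -[X in X <= _]mul1r -[X in 1 * X]subr0 -Rintegral_itv_cst ?(ltW r0) // /prim.
  apply: le_Rintegral => //; first exact (integrable_cst_itv 1 0 r).
  by move=> t /=; rewrite in_itv /= => /andP[t0 tr]; rewrite g_ge1 // t0 (le_lt_trans tr).
apply: (@le_trans _ _ (prim r * r)); last first.
  by rewrite expr2 ler_wpM2l // (le_trans (ltW r0)).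
rewrite expr2 prim_scale ?rI ?(ltW r0) // /prim -RintegralZr //.
apply: le_Rintegral => //.
- by apply: integrable_scale; rewrite ?(ltW r0) ?(ltW r1).
- by have := integrableZr _ r intg; exact.
move=> t /=; rewrite in_itv /= => /andP[t0 tr]; have t1 := le_lt_trans tr r1.
have rt_le : r * t <= t by rewrite ler_piMl // ltW.
rewrite ler_wpM2r ?(ltW r0) //; apply: g_nondecr => //.
- by rewrite in_itv /= mulr_ge0 ?(ltW r0) // (le_lt_trans rt_le t1).
- by rewrite in_itv /= t0.
Qed.

Lemma prim_geomean_bounds_nondecreasing r s : scaled_ratio_nonincreasing ->
  0 < r < 1 -> 0 < s < 1 ->
  prim (r * s) <= Num.sqrt (prim (r ^+ 2) * prim (s ^+ 2)) <= prim r * prim s.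
Proof.
move=> ratio hr hs; have g_ge0 t : 0 <= t < 1 -> 0 <= g t.
  by move=> /g_ge1; apply: le_trans.
have [[r0 r1] [s0 s1]] := (andP hr, andP hs).
have r2 : r ^+ 2 < 1 by rewrite expr2 mulr_ilt1 ?(ltW r0).
have s2 : s ^+ 2 < 1 by rewrite expr2 mulr_ilt1 ?(ltW s0).
apply: sqrtr_bounds; first by rewrite mulr_ge0 // prim_ge0.
by rewrite prim_mul_sqr_le //= exprMn ler_pM ?prim_ge0 ?prim_sqr_le.
Qed.

End NondecreasingIntegrand.

Section NonincreasingIntegrand.
Hypothesis g_nonincr : {in `[0, 1[ &, {homo g : x y /~ x <= y}}.
Hypothesis g_at0 : g 0 = 1.
Hypothesis g_ge0 : forall t, 0 <= t < 1 -> 0 <= g t.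

Let g_le1 t : 0 <= t < 1 -> g t <= 1.
Proof.
by move=> /andP[t0 t1]; rewrite -g_at0 g_nonincr // in_itv /= ?lexx ?ltr01 ?t0.
Qed.

Lemma prim_sqr_ge r : 0 < r < 1 -> prim r ^+ 2 <= prim (r ^+ 2).
Proof.
move=> /andP[r0 r1]; have rI : 0 < r <= 1 by rewrite r0 ltW.
have intg := integrable_unit_itv _ _ (lexx 0) r1.
have prim_le : prim r <= r.
  rewrite -[X in _ <= X]mul1r -[X in 1 * X]subr0 -Rintegral_itv_cst ?(ltW r0) // /prim.
  apply: le_Rintegral => //; first exact (integrable_cst_itv 1 0 r).
  by move=> t /=; rewrite in_itv /= => /andP[t0 tr]; rewrite g_le1 // t0 (le_lt_trans tr).
apply: (@le_trans _ _ (prim r * r)).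
  by rewrite expr2 ler_wpM2l // (prim_ge0 _ g_ge0 r1).
rewrite expr2 prim_scale ?rI ?(ltW r0) // /prim -RintegralZr //.
apply: le_Rintegral => //.
- by have := integrableZr _ r intg; exact.
- by apply: integrable_scale; rewrite ?(ltW r0) ?(ltW r1).
move=> t /=; rewrite in_itv /= => /andP[t0 tr]; have t1 := le_lt_trans tr r1.
have rt_le : r * t <= t by rewrite ler_piMl // ltW.
rewrite ler_wpM2r ?(ltW r0) //; apply: g_nonincr => //.
- by rewrite in_itv /= t0.
- by rewrite in_itv /= mulr_ge0 ?(ltW r0) // (le_lt_trans rt_le t1).
Qed.

Lemma prim_geomean_bounds_nonincreasing r s : scaled_ratio_nondecreasing ->
  0 < r < 1 -> 0 < s < 1 ->
  prim r * prim s <= Num.sqrt (prim (r ^+ 2) * prim (s ^+ 2)) <= prim (r * s).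
Proof.
move=> ratio hr hs; have [[r0 r1] [s0 s1]] := (andP hr, andP hs).
have rs1 : r * s < 1 by rewrite mulr_ilt1 ?(ltW r0) ?(ltW s0).
apply: sqrtr_bounds; first exact: prim_ge0.
by rewrite prim_mul_sqr_ge //= andbT exprMn ler_pM ?sqr_ge0 ?prim_sqr_ge.
Qed.

End NonincreasingIntegrand.

End Primitive.

Section PowerWeights.
Context {R : realType}.
Implicit Types (a b p q t x y lam : R).

Lemma normr_powR_continuous p : 0 < p -> continuous (fun t : R => `|t| `^ p).
Proof.
move=> p0 t; have [->|t0] := eqVneq t 0.
- apply/cvgrPdist_lt => e e0; have d0 : 0 < e `^ p^-1 by rewrite powR_gt0.
  near=> x; rewrite normr0 powR0 ?gt_eqF // sub0r normrN ger0_norm ?powR_ge0 //.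
  have xd : `|x| < e `^ p^-1.
    near: x; apply/nbhs_ballP; exists (e `^ p^-1) => //= y.
    by rewrite /ball /= sub0r normrN.
  have := gt0_ltr_powR p0 (normr_ge0 x : `|x| \in Num.nneg) _ xd.
  rewrite -powRrM mulVf ?gt_eqF // powRr1 ?(ltW e0) //; apply; rewrite nnegrE ltW //.
- suff : {for t, continuous ((fun a : R => a `^ p) \o (fun t : R => `|t|))} by [].
  apply: continuous_comp; first exact: norm_continuous.
  apply/differentiable_continuous/derivable1_diffP/derivable_powR.
  by rewrite in_itv /= normr_gt0 t0.
Unshelve. all: end_near. Qed.

Lemma inv_powR_le q a b : 0 <= q -> 0 < a <= b -> (b `^ q)^-1 <= (a `^ q)^-1.
Proof.
move=> q0 /andP[a0 ab]; have b0 := lt_le_trans a0 ab.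
rewrite lef_pV2 ?posrE ?powR_gt0 //.
by apply: ge0_ler_powR => //; rewrite nnegrE ltW.
Qed.

(* [pweight (-1) q p] is the integrand of [arcsin_p] (q = 1/p) and [artanh_p] (q = 1),
   [pweight 1 q p] that of [arsinh_p] and [arctan_p].  The absolute value makes it
   continuous at 0: [powR] is 1 on negative arguments. *)
Definition pweight sg q p t := ((1 + sg * `|t| `^ p) `^ q)^-1.

Lemma pweightE {sg q p t} : 0 <= t -> pweight sg q p t = ((1 + sg * t `^ p) `^ q)^-1.
Proof. by move=> t0; rewrite /pweight ger0_norm. Qed.

Lemma powR_lt1 p t : 0 < p -> 0 <= t < 1 -> t `^ p < 1.
Proof.
move=> p0 /andP[t0 t1]; have := @gt0_ltr_powR R p p0 t 1.
by rewrite !nnegrE t0 ler01 powR1; apply.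
Qed.

Variables q p : R.
Hypotheses (q0 : 0 < q) (p0 : 0 < p).

Let powR_le x y : 0 <= x <= y -> x `^ p <= y `^ p.
Proof.
by move=> /andP[x0 xy]; apply: ge0_ler_powR; rewrite ?nnegrE ?(ltW p0) ?(le_trans x0 xy).
Qed.

Let inv_powR_mul a b : 0 <= a -> 0 <= b -> (a `^ q)^-1 * (b `^ q)^-1 = ((a * b) `^ q)^-1.
Proof. by move=> a0 b0; rewrite powRM // invfM. Qed.

Lemma pweight0 sg : pweight sg q p 0 = 1.
Proof. by rewrite /pweight normr0 powR0 ?gt_eqF // mulr0 addr0 powR1 invr1. Qed.

Lemma pweight_ge0 sg t : 0 <= pweight sg q p t.
Proof. by rewrite invr_ge0 powR_ge0. Qed.

Lemma pweight_continuous sg : (forall t, `|t| < 1 -> 0 < 1 + sg * `|t| `^ p) ->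
  {in `]-1, 1[, continuous (pweight sg q p)}.
Proof.
move=> base t; rewrite in_itv /= -ltr_norml => /base tb.
suff : {for t, continuous (pweight sg q p)} by [].
apply: continuousV; first by rewrite gt_eqF // powR_gt0.
suff : {for t, continuous ((fun a : R => a `^ q) \o (fun t : R => 1 + sg * `|t| `^ p))}.
  by [].
apply: continuous_comp.
  have mulc : {for t, continuous (fun t : R => sg * `|t| `^ p)}.
    apply: (@continuousM _ _ (cst sg) (fun t => `|t| `^ p)); first exact: cvg_cst.
    exact: normr_powR_continuous.
  exact: (@continuousD R R^o R (cst 1) _ t (cvg_cst _) mulc).
apply/differentiable_continuous/derivable1_diffP/derivable_powR.
by rewrite in_itv /= tb.
Qed.

Lemma pweightN_continuous : {in `]-1, 1[, continuous (pweight (-1) q p)}.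
Proof.
apply: pweight_continuous => t t1.
by rewrite mulN1r subr_gt0 powR_lt1 // normr_ge0.
Qed.

Lemma pweightP_continuous : {in `]-1, 1[, continuous (pweight 1 q p)}.
Proof.
apply: pweight_continuous => t _.
by rewrite mul1r (lt_le_trans ltr01) // lerDl powR_ge0.
Qed.

Lemma pweightN_nondecreasing : {in `[0, 1[ &, {homo pweight (-1) q p : x y / x <= y}}.
Proof.
move=> x y; rewrite !in_itv /= => /andP[x0 _] /andP[y0 y1] xy.
rewrite (pweightE x0) (pweightE y0) inv_powR_le ?(ltW q0) // !mulN1r.
by rewrite subr_gt0 powR_lt1 ?y0 //= lerD2l lerN2 powR_le ?x0.
Qed.

Lemma pweightP_nonincreasing : {in `[0, 1[ &, {homo pweight 1 q p : x y /~ x <= y}}.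
Proof.
move=> x y; rewrite !in_itv /= => /andP[x0 _] /andP[y0 _] yx.
rewrite (pweightE x0) (pweightE y0) inv_powR_le ?(ltW q0) // !mul1r.
by rewrite lerD2l powR_le ?y0 // andbT (lt_le_trans ltr01) // lerDl powR_ge0.
Qed.

Let scaled_powR_facts lam t y : 0 < lam <= 1 -> 0 <= t <= y ->
  [/\ 0 <= lam `^ p <= 1, 0 <= t `^ p, (lam * t) `^ p = lam `^ p * t `^ p,
      (lam * y) `^ p = lam `^ p * y `^ p
    & 0 <= (1 - lam `^ p) * (y `^ p - t `^ p)].
Proof.
move=> /andP[lam0 lam1] /andP[t0 ty]; have L1 : lam `^ p <= 1.
  by have := @powR_le lam 1; rewrite powR1; apply; rewrite (ltW lam0).
split; rewrite ?powR_ge0 ?L1 ?powRM ?(ltW lam0) ?(le_trans t0 ty) //.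
by rewrite mulr_ge0 // subr_ge0 // powR_le ?t0.
Qed.

Lemma pweightN_ratio : scaled_ratio_nonincreasing (pweight (-1) q p).
Proof.
move=> lam t y lamI tyI y1.
have [/andP[L0 L1] T0 LT LY key] := scaled_powR_facts _ _ _ lamI tyI.
have [[lam0 _] [t0 ty]] := (andP lamI, andP tyI); have y0 := le_trans t0 ty.
have lamt0 : 0 <= lam * t by rewrite mulr_ge0 ?(ltW lam0).
have lamy0 : 0 <= lam * y by rewrite mulr_ge0 ?(ltW lam0).
rewrite (pweightE lamt0) (pweightE lamy0) (pweightE t0) (pweightE y0) LT LY !mulN1r.
have Y1 : y `^ p < 1 by rewrite powR_lt1 ?y0.
have TY : t `^ p <= y `^ p by rewrite powR_le ?t0.
have LT1 : lam `^ p * t `^ p <= t `^ p by rewrite ler_piMl.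
have LY1 : lam `^ p * y `^ p <= y `^ p by rewrite ler_piMl ?powR_ge0.
have [A0 B0 C0 D0] : [/\ 0 < 1 - lam `^ p * y `^ p, 0 < 1 - t `^ p,
  0 < 1 - y `^ p & 0 < 1 - lam `^ p * t `^ p] by split; lra.
rewrite !inv_powR_mul ?(ltW A0) ?(ltW B0) ?(ltW C0) ?(ltW D0) //.
apply: inv_powR_le; first exact: ltW.
by rewrite mulr_gt0 //=; nra.
Qed.

Lemma pweightP_ratio : scaled_ratio_nondecreasing (pweight 1 q p).
Proof.
move=> lam t y lamI tyI y1.
have [/andP[L0 L1] T0 LT LY key] := scaled_powR_facts _ _ _ lamI tyI.
have [[lam0 _] [t0 ty]] := (andP lamI, andP tyI); have y0 := le_trans t0 ty.
have lamt0 : 0 <= lam * t by rewrite mulr_ge0 ?(ltW lam0).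
have lamy0 : 0 <= lam * y by rewrite mulr_ge0 ?(ltW lam0).
rewrite (pweightE lamt0) (pweightE lamy0) (pweightE t0) (pweightE y0) LT LY !mul1r.
have Y0 := powR_ge0 y p.
have [A0 B0 C0 D0] : [/\ 0 < 1 + lam `^ p * y `^ p, 0 < 1 + t `^ p,
  0 < 1 + y `^ p & 0 < 1 + lam `^ p * t `^ p].
  by split; rewrite (lt_le_trans ltr01) // lerDl ?mulr_ge0.
rewrite !inv_powR_mul ?(ltW A0) ?(ltW B0) ?(ltW C0) ?(ltW D0) //.
apply: inv_powR_le; first exact: ltW.
by rewrite mulr_gt0 //=; nra.
Qed.

Lemma pweightN_geomean_bounds r s : 0 < r < 1 -> 0 < s < 1 ->
  prim (pweight (-1) q p) (r * s)
    <= Num.sqrt (prim (pweight (-1) q p) (r ^+ 2) * prim (pweight (-1) q p) (s ^+ 2))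
    <= prim (pweight (-1) q p) r * prim (pweight (-1) q p) s.
Proof.
apply: prim_geomean_bounds_nondecreasing.
- exact: pweightN_continuous.
- exact: pweightN_nondecreasing.
- exact: pweight0.
- exact: pweightN_ratio.
Qed.

Lemma pweightP_geomean_bounds r s : 0 < r < 1 -> 0 < s < 1 ->
  prim (pweight 1 q p) r * prim (pweight 1 q p) s
    <= Num.sqrt (prim (pweight 1 q p) (r ^+ 2) * prim (pweight 1 q p) (s ^+ 2))
    <= prim (pweight 1 q p) (r * s).
Proof.
apply: prim_geomean_bounds_nonincreasing.
- exact: pweightP_continuous.
- exact: pweightP_nonincreasing.
- exact: pweight0.
- by move=> t _; exact: pweight_ge0.
- exact: pweightP_ratio.
Qed.

End PowerWeights.

Section GeneralizedInverseFunctions.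
Context {R : realType}.
Implicit Types p y : R.

Lemma arcsin_p_prim p : arcsin_p p = prim (pweight (-1) p^-1 p).
Proof.
apply/funext => y; apply: eq_Rintegral => t; rewrite inE /= in_itv /= => /andP[t0 _].
by rewrite pweightE // mulN1r powRN.
Qed.

Lemma arsinh_p_prim p : arsinh_p p = prim (pweight 1 p^-1 p).
Proof.
apply/funext => y; apply: eq_Rintegral => t; rewrite inE /= in_itv /= => /andP[t0 _].
by rewrite pweightE // mul1r powRN.
Qed.

Lemma arctan_p_prim p : arctan_p p = prim (pweight 1 1 p).
Proof.
apply/funext => y; apply: eq_Rintegral => t; rewrite inE /= in_itv /= => /andP[t0 _].
by rewrite pweightE // mul1r powRr1 // addr_ge0 ?powR_ge0.
Qed.

Lemma artanh_p_prim p y : 0 < p -> y < 1 -> artanh_p p y = prim (pweight (-1) 1 p) y.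
Proof.
move=> p0 y1; apply: eq_Rintegral => t; rewrite inE /= in_itv /= => /andP[t0 ty].
by rewrite pweightE // mulN1r powRr1 // subr_ge0 ltW // powR_lt1 // t0 (le_lt_trans ty).
Qed.

End GeneralizedInverseFunctions.

Theorem theorem2p5 (R : realType) (p r s : R) :
  1 < p -> 0 < r < 1 -> 0 < s < 1 ->
  [/\ arcsin_p p (r * s) <= Num.sqrt (arcsin_p p (r ^+ 2) * arcsin_p p (s ^+ 2))
        <= arcsin_p p r * arcsin_p p s,
      artanh_p p (r * s) <= Num.sqrt (artanh_p p (r ^+ 2) * artanh_p p (s ^+ 2))
        <= artanh_p p r * artanh_p p s,
      arsinh_p p r * arsinh_p p s
        <= Num.sqrt (arsinh_p p (r ^+ 2) * arsinh_p p (s ^+ 2)) <= arsinh_p p (r * s)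
    & arctan_p p r * arctan_p p s
        <= Num.sqrt (arctan_p p (r ^+ 2) * arctan_p p (s ^+ 2)) <= arctan_p p (r * s)].
Proof.
move=> p1 hr hs; have p0 : 0 < p := lt_trans ltr01 p1.
have pV0 : 0 < p^-1 by rewrite invr_gt0.
have [[r0 r1] [s0 s1]] := (andP hr, andP hs).
have rs1 : r * s < 1 by rewrite mulr_ilt1 ?(ltW r0) ?(ltW s0).
have r21 : r ^+ 2 < 1 by rewrite expr2 mulr_ilt1 ?(ltW r0).
have s21 : s ^+ 2 < 1 by rewrite expr2 mulr_ilt1 ?(ltW s0).
split.
- by rewrite arcsin_p_prim; apply: pweightN_geomean_bounds.
- by rewrite !(artanh_p_prim _ _ p0) //; apply: pweightN_geomean_bounds.
- by rewrite arsinh_p_prim; apply: pweightP_geomean_bounds.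
- by rewrite arctan_p_prim; apply: pweightP_geomean_bounds.
Qed.
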